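(* Let $P,Q\in\Gamma_n$ with $P\ne Q$, and $0<r\le R$ with $r\le p_i/q_i\le R$ for all $i$. Then $$r\le\frac{\sqrt{2K(P\|Q)}}{\sqrt{\chi^2(Q\|P)}}\le R.$$
   Context: $\Gamma_n=\{P=(p_1,\dots,p_n): p_i>0,\ \sum_i p_i=1\}$, $n\ge2$. $K(P\|Q)=\sum_i p_i\ln(p_i/q_i)$ and $\chi^2(Q\|P)=\sum_i\frac{(p_i-q_i)^2}{p_i}$. *)

(* concrete reals R. Distributions on n points are functions
   nat -> R, indices 0..n-1 are the meaningful ones. *)
From Stdlib Require Import Reals.
Open Scope R_scope.

Definition sumn_R (n : nat) (f : nat -> R) : R :=
  match n with
  | O => 0
  | S m => sum_f_R0 f m
  end.

Definition in_Gamma (n : nat) (P : nat -> R) : Prop :=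
  (forall i, (i < n)%nat -> 0 < P i) /\ sumn_R n P = 1.

Definition distinct_on (n : nat) (P Q : nat -> R) : Prop :=
  exists i, (i < n)%nat /\ P i <> Q i.

Definition KL (n : nat) (P Q : nat -> R) : R :=
  sumn_R n (fun i => P i * ln (P i / Q i)).

Definition chi2 (n : nat) (Q P : nat -> R) : R :=
  sumn_R n (fun i => (P i - Q i) ^ 2 / P i).

(* With t = p_i/q_i, the summands of 2K(P||Q) - since sum p_i = sum q_i - can be
   taken to be 2 q_i f(t) with f(t) = t ln t - t + 1, while those of chi^2(Q||P)
   are q_i (t - 1)^2 / t.  Two second-order estimates of ln around 1 give
   min(1, t^2) (t - 1)^2 <= 2 t f(t) <= max(1, t^2) (t - 1)^2, and r <= 1 <= R
   because both distributions have total mass 1.  Hence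
   r^2 chi^2 <= 2K <= R^2 chi^2 termwise, and one takes square roots. *)
From Stdlib Require Import Reals Lra Lia.
From Coquelicot Require Import Coquelicot.
Open Scope R_scope.

Lemma sign_around_one_of_nonneg_derivative (f f' : R -> R) :
  (forall x, 0 < x -> derivable_pt_lim f x (f' x)) ->
  (forall x, 0 < x -> 0 <= f' x) -> f 1 = 0 ->
  forall t, 0 < t -> 0 <= (t - 1) * f t.
Proof.
  intros Hd Hf' Hf1 t Ht.
  destruct (Rtotal_order t 1) as [Hlt | [-> | Hgt]].
  - destruct (MVT_cor2 f f' t 1) as [c [Hdiff Hc]]; [lra | intros c Hc; apply Hd; lra |].
    assert (0 <= f' c) by (apply Hf'; lra).
    replace ((t - 1) * f t) with (f' c * (1 - t) ^ 2) by (rewrite Hf1 in Hdiff; nra).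
    apply Rmult_le_pos; [assumption | apply pow2_ge_0].
  - lra.
  - destruct (MVT_cor2 f f' 1 t) as [c [Hdiff Hc]]; [lra | intros c Hc; apply Hd; lra |].
    assert (0 <= f' c) by (apply Hf'; lra).
    replace ((t - 1) * f t) with (f' c * (t - 1) ^ 2) by (rewrite Hf1 in Hdiff; nra).
    apply Rmult_le_pos; [assumption | apply pow2_ge_0].
Qed.

Lemma ln_second_order_lower t :
  0 < t -> 0 <= (t - 1) * (2 * t * (t * ln t - t + 1) - (t - 1) ^ 2).
Proof.
  intro Ht.
  pose proof (sign_around_one_of_nonneg_derivative
    (fun x => ln x - (3 / 2 - 2 / x + 1 / (2 * x ^ 2))) (fun x => (x - 1) ^ 2 / x ^ 3)) as Hsign.
  assert (Hmain : 0 <= (t - 1) * (ln t - (3 / 2 - 2 / t + 1 / (2 * t ^ 2)))).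
  { apply Hsign; [| | rewrite ln_1; field | exact Ht].
    - intros x Hx. apply is_derive_Reals.
      auto_derive; [repeat split; try lra; apply Rgt_not_eq; nra | field; lra].
    - intros x Hx. apply Rdiv_le_0_compat; [apply pow2_ge_0 | apply pow_lt; lra]. }
  replace (2 * t * (t * ln t - t + 1) - (t - 1) ^ 2)
    with (2 * t ^ 2 * (ln t - (3 / 2 - 2 / t + 1 / (2 * t ^ 2)))) by (field; lra).
  nra.
Qed.

Lemma ln_second_order_upper t :
  0 < t -> 0 <= (t - 1) * (t ^ 2 * (t - 1) ^ 2 - 2 * t * (t * ln t - t + 1)).
Proof.
  intro Ht.
  pose proof (sign_around_one_of_nonneg_derivative
    (fun x => (x - 1) ^ 2 / 2 + 1 - 1 / x - ln x) (fun x => (x - 1) ^ 2 * (x + 1) / x ^ 2)) as Hsign.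
  assert (Hmain : 0 <= (t - 1) * ((t - 1) ^ 2 / 2 + 1 - 1 / t - ln t)).
  { apply Hsign; [| | rewrite ln_1; field | exact Ht].
    - intros x Hx. apply is_derive_Reals.
      auto_derive; [repeat split; try lra; apply Rgt_not_eq; nra | field; lra].
    - intros x Hx. apply Rdiv_le_0_compat; [| apply pow_lt; lra].
      apply Rmult_le_pos; [apply pow2_ge_0 | lra]. }
  replace (t ^ 2 * (t - 1) ^ 2 - 2 * t * (t * ln t - t + 1))
    with (2 * t ^ 2 * ((t - 1) ^ 2 / 2 + 1 - 1 / t - ln t)) by (field; lra).
  nra.
Qed.

Lemma kl_generator_sandwich t r Rb :
  0 < t -> r <= t <= Rb -> 0 < r <= 1 -> 1 <= Rb ->
  r ^ 2 * (t - 1) ^ 2 <= 2 * t * (t * ln t - t + 1) <= Rb ^ 2 * (t - 1) ^ 2.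
Proof.
  intros Ht [Hrt HtR] Hr HR.
  pose proof (ln_second_order_lower t Ht) as Hlo.
  pose proof (ln_second_order_upper t Ht) as Hup.
  set (E := 2 * t * (t * ln t - t + 1)) in *.
  assert (Hsq : 0 <= (t - 1) ^ 2) by apply pow2_ge_0.
  destruct (Rtotal_order t 1) as [Ht1 | [Ht1 | Ht1]].
  - assert (E <= (t - 1) ^ 2) by nra.
    assert (t ^ 2 * (t - 1) ^ 2 <= E) by nra.
    assert (r ^ 2 * (t - 1) ^ 2 <= t ^ 2 * (t - 1) ^ 2).
    { apply Rmult_le_compat_r; [assumption | apply pow_incr; lra]. }
    assert (1 * (t - 1) ^ 2 <= Rb ^ 2 * (t - 1) ^ 2).
    { apply Rmult_le_compat_r; [assumption | nra]. }
    lra.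
  - subst t. unfold E. rewrite ln_1. split; nra.
  - assert ((t - 1) ^ 2 <= E) by nra.
    assert (E <= t ^ 2 * (t - 1) ^ 2) by nra.
    assert (t ^ 2 * (t - 1) ^ 2 <= Rb ^ 2 * (t - 1) ^ 2).
    { apply Rmult_le_compat_r; [assumption | apply pow_incr; lra]. }
    assert (r ^ 2 * (t - 1) ^ 2 <= 1 * (t - 1) ^ 2).
    { apply Rmult_le_compat_r; [assumption | nra]. }
    lra.
Qed.

Lemma kl_term_sandwich p q r Rb :
  0 < p -> 0 < q -> r <= p / q <= Rb -> 0 < r <= 1 -> 1 <= Rb ->
  r ^ 2 * ((p - q) ^ 2 / p) <= 2 * (p * ln (p / q) - p + q)
                             <= Rb ^ 2 * ((p - q) ^ 2 / p).
Proof.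
  intros Hp Hq Hb Hr HR.
  set (t := p / q) in *.
  assert (Ht : 0 < t) by now apply Rdiv_lt_0_compat.
  assert (Hqt : 0 < q / t) by now apply Rdiv_lt_0_compat.
  destruct (kl_generator_sandwich t r Rb Ht Hb Hr HR) as [Hlo Hup].
  assert (Ep : p = t * q) by (unfold t; field; lra).
  clearbody t; subst p.
  replace (2 * (t * q * ln t - t * q + q)) with (2 * t * (t * ln t - t + 1) * (q / t))
    by (field; lra).
  replace ((t * q - q) ^ 2 / (t * q)) with ((t - 1) ^ 2 * (q / t)) by (field; lra).
  split; nra.
Qed.

Lemma sum_f_R0_ge_term (f : nat -> R) m i :
  (forall j, (j <= m)%nat -> 0 <= f j) -> (i <= m)%nat -> f i <= sum_f_R0 f m.
Proof.
  revert i; induction m as [| m IH]; intros i Hf Hi; simpl.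
  - replace i with 0%nat by lia. lra.
  - assert (Hlast : 0 <= f (S m)) by (apply Hf; lia).
    destruct (Nat.eq_dec i (S m)) as [-> | Hne].
    + assert (0 <= sum_f_R0 f m).
      { apply (Rle_trans _ (f 0%nat)); [apply Hf; lia | apply IH; [intros; apply Hf |]; lia]. }
      lra.
    + assert (f i <= sum_f_R0 f m) by (apply IH; [intros; apply Hf |]; lia). lra.
Qed.

Lemma sum_f_R0_scal_sandwich (f g : nat -> R) a b m :
  (forall i, (i <= m)%nat -> a * f i <= g i <= b * f i) ->
  a * sum_f_R0 f m <= sum_f_R0 g m <= b * sum_f_R0 f m.
Proof.
  intro Hfg. rewrite !scal_sum.
  split; apply sum_Rle; intros i Hi; rewrite Rmult_comm; apply Hfg, Hi.
Qed.

Lemma sqrt_ratio_between a b x c :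
  0 <= a -> 0 <= b -> 0 < c -> a ^ 2 * c <= x <= b ^ 2 * c ->
  a <= sqrt x / sqrt c <= b.
Proof.
  intros Ha Hb Hc [Hax Hxb].
  assert (Hsc : 0 < sqrt c) by now apply sqrt_lt_R0.
  assert (Hsqrt : forall y, 0 <= y -> sqrt (y ^ 2 * c) = y * sqrt c).
  { intros y Hy. rewrite sqrt_mult, sqrt_pow2; [reflexivity | exact Hy | apply pow2_ge_0 | lra]. }
  apply sqrt_le_1_alt in Hax, Hxb. rewrite Hsqrt in Hax, Hxb by assumption.
  split.
  - apply Rmult_le_reg_r with (sqrt c); [exact Hsc |]. field_simplify; lra.
  - apply Rmult_le_reg_r with (sqrt c); [exact Hsc |]. field_simplify; lra.
Qed.

Lemma ratio_bounds_straddle_one (P Q : nat -> R) m r Rb :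
  sum_f_R0 P m = 1 -> sum_f_R0 Q m = 1 ->
  (forall i, (i <= m)%nat -> 0 < Q i) ->
  (forall i, (i <= m)%nat -> r <= P i / Q i <= Rb) ->
  r <= 1 <= Rb.
Proof.
  intros SP SQ HQ Hratio.
  assert (Hmass : r * sum_f_R0 Q m <= sum_f_R0 P m <= Rb * sum_f_R0 Q m).
  { apply sum_f_R0_scal_sandwich. intros i Hi.
    pose proof (HQ i Hi). destruct (Hratio i Hi).
    replace (P i) with (P i / Q i * Q i) by (field; lra). split; nra. }
  rewrite SP, SQ in Hmass. lra.
Qed.

Lemma sum_f_R0_add_mass_difference (f P Q : nat -> R) m :
  sum_f_R0 P m = sum_f_R0 Q m ->
  2 * sum_f_R0 f m = sum_f_R0 (fun i => 2 * (f i - P i + Q i)) m.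
Proof.
  intro Hmass.
  rewrite (sum_eq (fun i => 2 * (f i - P i + Q i)) (fun i => (f i - P i + Q i) * 2))
    by (intros; ring).
  rewrite <- scal_sum, plus_sum, minus_sum, Hmass. ring.
Qed.

Theorem mainTheorem16 (n : nat) (P Q : nat -> R) (r Rb : R) :
  (2 <= n)%nat ->
  in_Gamma n P -> in_Gamma n Q -> distinct_on n P Q ->
  0 < r -> r <= Rb ->
  (forall i, (i < n)%nat -> r <= P i / Q i <= Rb) ->
  r <= sqrt (2 * KL n P Q) / sqrt (chi2 n Q P) <= Rb.
Proof.
  unfold in_Gamma, distinct_on, KL, chi2, sumn_R.
  intros Hn [HP SP] [HQ SQ] [i0 [Hi0 Hne]] Hr _ Hratio.
  destruct n as [| m]; [lia |].
  assert (HP' : forall i, (i <= m)%nat -> 0 < P i) by (intros; apply HP; lia).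
  assert (HQ' : forall i, (i <= m)%nat -> 0 < Q i) by (intros; apply HQ; lia).
  assert (Hratio' : forall i, (i <= m)%nat -> r <= P i / Q i <= Rb)
    by (intros; apply Hratio; lia).
  destruct (ratio_bounds_straddle_one P Q m r Rb SP SQ HQ' Hratio') as [Hr1 HR1].
  assert (Hchi : 0 < sum_f_R0 (fun i => (P i - Q i) ^ 2 / P i) m).
  { apply Rlt_le_trans with ((P i0 - Q i0) ^ 2 / P i0).
    - apply Rdiv_lt_0_compat; [apply pow2_gt_0; lra | apply HP; lia].
    - apply (sum_f_R0_ge_term (fun i => (P i - Q i) ^ 2 / P i)); [| lia].
      intros j Hj. apply Rdiv_le_0_compat; [apply pow2_ge_0 | auto]. }
  apply sqrt_ratio_between; [lra | lra | exact Hchi |].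
  rewrite (sum_f_R0_add_mass_difference _ P Q) by congruence.
  apply sum_f_R0_scal_sandwich. intros i Hi.
  apply kl_term_sandwich; auto.
Qed.
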